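(* Let $G$ be a graph on $V$ and $W\subseteq V$ reducible in $G$. Then for every combinatorial reduction strategy applicable to $G$ whose domain is $W$, the number of applications of the negative rule $\mathrm{gnr}$ in the strategy equals the nullity of $W$ in $G$, namely $|W|-\operatorname{rank}_{\mathbf F_2}(A_{W,W})$. In particular, all such strategies use the same number of negative rules, and every successful strategy (domain $V$) uses exactly $|V|-\operatorname{rank}_{\mathbf F_2}(A)$ negative rules.
   Context: A graph means a finite simple graph in which loops are allowed, with adjacency matrix $A$ over $\mathbf F_2$ ($A_{vv}=1$ iff $v$ has a loop); $A_{W,W}$ is the principal submatrix on $W$. Let $\mathcal V$ be the $\mathbf F_2$-vector space with basis $V$, $\mathcal E(x,y)=x^TAy$, $\langle W\rangle$ the span of $W$, $\langle W\rangle^{\perp\mathcal E}=\{x:\mathcal E(x,w)=0\ \forall w\in\langle W\rangle\}$; $W$ is reducible if $\langle W\rangle+\langle W\rangle^{\perp\mathcal E}=\mathcal V$. Combinatorial reduction rules (domain ordered first, $R$ the principal submatrix on the remaining vertices): $\mathrm{gpr}_v$ applies iff $v$ has a loop, $\begin{pmatrix}1&Q\\Q^T&R\end{pmatrix}\mapsto R-Q^TQ$; $\mathrm{gdr}_{v_1,v_2}$ applies iff $v_1,v_2$ are loopless and adjacent, $\begin{pmatrix}J&Q\\Q^T&R\end{pmatrix}\mapsto R-Q^TJQ$, $J=\begin{pmatrix}0&1\\1&0\end{pmatrix}$; $\mathrm{gnr}_v$ (negative rule) applies iff $v$ is loopless with no neighbors, $\begin{pmatrix}0&\mathbf 0\\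 \mathbf 0^T&R\end{pmatrix}\mapsto R$. A combinatorial reduction strategy is a sequence $(\gamma_1,\dots,\gamma_k)$ of such rules; it is applicable to $G$ if each $\gamma_i$ applies to $\gamma_{i-1}\circ\cdots\circ\gamma_1(G)$; its domain is the set of all vertices removed; it is successful if applicable with domain $V$. *)

From HB Require Import structures.
From mathcomp Require Import all_boot all_order all_algebra.
Set Implicit Arguments. Unset Strict Implicit. Unset Printing Implicit Defensive.
Import GRing.Theory.
Local Open Scope ring_scope.

(* A graph on the vertex set V = 'I_n (loops allowed) is given by its
   symmetric adjacency matrix A over F_2; A v v = 1 iff v has a loop. *)

Definition unitv (n : nat) (v : 'I_n) : 'rV['F_2]_n := delta_mx 0 v.

Definition spanmx (n : nat) (W : {set 'I_n}) : 'M['F_2]_n :=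
  \matrix_(i < n) (if i \in W then unitv i else 0).

Definition bform (n : nat) (A : 'M['F_2]_n) (x y : 'rV['F_2]_n) : 'F_2 :=
  (x *m A *m y^T) 0 0.

Definition in_perp (n : nat) (A : 'M['F_2]_n) (W : {set 'I_n}) (x : 'rV['F_2]_n) : Prop :=
  forall w : 'rV['F_2]_n, (w <= spanmx W)%MS -> bform A x w = 0.

Definition reducible (n : nat) (A : 'M['F_2]_n) (W : {set 'I_n}) : Prop :=
  forall z : 'rV['F_2]_n, exists x y : 'rV['F_2]_n,
    [/\ (x <= spanmx W)%MS, in_perp A W y & z = x + y].

(* Principal submatrix A_{W,W} (rows/columns indexed by W, in increasing order). *)
Definition submxW (n : nat) (A : 'M['F_2]_n) (W : {set 'I_n}) : 'M['F_2]_#|W| :=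
  mxsub (fun i : 'I_#|W| => enum_val i) (fun j : 'I_#|W| => enum_val j) A.

Inductive rule (n : nat) : Type :=
| Gpr of 'I_n
| Gdr of 'I_n & 'I_n
| Gnr of 'I_n.

Definition is_gnr (n : nat) (r : rule n) : bool :=
  if r is Gnr _ then true else false.

Definition rule_dom (n : nat) (r : rule n) : {set 'I_n} :=
  match r with
  | Gpr v => [set v]
  | Gdr v1 v2 => [set v1; v2]
  | Gnr v => [set v]
  end.

(* A (current) graph: its current vertex set D, and a matrix whose principal
   submatrix on D is the adjacency matrix (entries outside D are irrelevant). *)
Definition state (n : nat) : Type := ({set 'I_n} * 'M['F_2]_n)%type.

Definition apply_rule (n : nat) (r : rule n) (G : state n) : option (state n) :=
  let: (D, M) := G in
  match r with
  | Gpr v =>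
      if (v \in D) && (M v v == 1) then
        Some (D :\ v, \matrix_(x, y) (M x y - M v x * M v y))
      else None
  | Gdr v1 v2 =>
      if [&& v1 \in D, v2 \in D, v1 != v2, M v1 v1 == 0, M v2 v2 == 0 & M v1 v2 == 1]
      then Some (D :\ v1 :\ v2,
                 \matrix_(x, y) (M x y - (M v1 x * M v2 y + M v2 x * M v1 y)))
      else None
  | Gnr v =>
      if (v \in D) && (M v v == 0) && [forall u in D, (u != v) ==> (M v u == 0)]
      then Some (D :\ v, M)
      else None
  end.

Fixpoint run (n : nat) (s : seq (rule n)) (G : state n) : option (state n) :=
  match s with
  | [::] => Some G
  | r :: s' => match apply_rule r G with
               | Some G' => run s' G'
               | None => None
               end
  end.

Definition graph_state (n : nat) (A : 'M['F_2]_n) : state n := (setT, A).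

Definition applicable (n : nat) (A : 'M['F_2]_n) (s : seq (rule n)) : Prop :=
  run s (graph_state A) <> None.

Definition strat_dom (n : nat) (s : seq (rule n)) : {set 'I_n} :=
  \bigcup_(r <- s) rule_dom r.

Definition successful (n : nat) (A : 'M['F_2]_n) (s : seq (rule n)) : Prop :=
  applicable A s /\ strat_dom s = setT.

(* Follow a strategy and let T be the set of not yet removed vertices of W, so
   that the current graph restricted to T has adjacency matrix A_{T,T}.  A
   positive (resp. double) rule on v (resp. v1 v2) performs a Schur-complement
   pivot on the invertible 1x1 (resp. 2x2) principal block of A_{T,T}, so the
   rank drops by exactly the number of removed vertices; a negative rule removes
   a zero row and column and leaves the rank unchanged.  Hence the nullity
   |T| - rank A_{T,T} decreases by one exactly at the negative rules, and it is
   zero once T is empty. *)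

From HB Require Import structures.
From mathcomp Require Import all_boot all_order all_algebra.
Set Implicit Arguments. Unset Strict Implicit. Unset Printing Implicit Defensive.
Import GRing.Theory.
Local Open Scope ring_scope.

Section SchurComplement.

Variables (F : fieldType) (n k : nat).
Variables (N : 'M[F]_n) (E : 'M[F]_(k, n)) (Q : 'M[F]_k).
Hypotheses (QP : Q *m (E *m N *m E^T) = 1%:M) (PQ : (E *m N *m E^T) *m Q = 1%:M).

Definition schur_mx : 'M[F]_n := N - N *m (E^T *m Q *m E) *m N.

Lemma schur_mx_mul_tr : schur_mx *m E^T = 0.
Proof.
rewrite mulmxBl.
have -> : N *m (E^T *m Q *m E) *m N *m E^T = N *m E^T *m (Q *m (E *m N *m E^T)).
  by rewrite !mulmxA.
by rewrite QP mulmx1 subrr.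
Qed.

Lemma mul_schur_mx : E *m schur_mx = 0.
Proof.
rewrite mulmxBr.
have -> : E *m (N *m (E^T *m Q *m E) *m N) = (E *m N *m E^T *m Q) *m (E *m N).
  by rewrite !mulmxA.
by rewrite PQ mul1mx subrr.
Qed.

(* The rows of N span schur_mx + E N, and the sum is direct because
   schur_mx E^T = 0 whereas E N E^T is invertible. *)
Lemma mxrank_schur_mx : \rank N = (\rank schur_mx + k)%N.
Proof.
have eqN : (N == schur_mx + E *m N)%MS.
  apply/andP; split.
    have defN : N = schur_mx + (N *m E^T *m Q) *m (E *m N).
      by rewrite /schur_mx !mulmxA subrK.
    rewrite {1}defN; exact: addmx_sub_adds (submx_refl _) (submxMl _ _).
  rewrite addsmx_sub submxMl andbT.
  have -> : schur_mx = (1%:M - N *m E^T *m Q *m E) *m N.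
    by rewrite /schur_mx mulmxBl mul1mx !mulmxA.
  exact: submxMl.
have rankEN : \rank (E *m N) = k.
  apply/eqP; rewrite eqn_leq rank_leq_row /=.
  by rewrite -{1}(mxrank1 F k) -PQ -mulmxA (leq_trans (mxrankM_maxl _ _)) ?mxrankM_maxl.
have capEN : (schur_mx :&: E *m N)%MS = 0.
  apply/eqP; rewrite -submx0.
  have [D defD] := submxP (capmxSr schur_mx (E *m N)).
  have D0 : D *m (E *m N *m E^T) = 0.
    apply/eqP; rewrite -submx0 !mulmxA -(mulmxA D) -defD.
    apply: submx_trans (submxMr _ (capmxSl _ _)) _; rewrite schur_mx_mul_tr; exact: sub0mx.
  rewrite defD -[D]mulmx1 -PQ !mulmxA -(mulmxA D) -(mulmxA D) D0.
  by rewrite !mul0mx submx_refl.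
have := mxrank_sum_cap schur_mx (E *m N).
by rewrite capEN mxrank0 addn0 rankEN => <-; apply: eqmx_rank.
Qed.

End SchurComplement.

Section PrincipalSubmatrix.

Variables (R : comPzRingType) (n : nat).
Implicit Types (M : 'M[R]_n) (S T : {set 'I_n}).

Definition pid_set T : 'M[R]_n := diag_mx (\row_i (i \in T)%:R).

(* The principal submatrix M_{T,T}, kept in n x n shape with zeros outside T. *)
Definition principal_mx M T : 'M[R]_n := pid_set T *m M *m pid_set T.

Definition sel_mx T : 'M[R]_(#|T|, n) := rowsub enum_val 1%:M.

Lemma principal_mxE M T i j :
  principal_mx M T i j = if (i \in T) && (j \in T) then M i j else 0.
Proof.
rewrite /principal_mx mul_mx_diag mul_diag_mx !mxE.
by case: (i \in T); case: (j \in T); rewrite ?mul1r ?mulr1 ?mul0r ?mulr0.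
Qed.

Lemma pid_setM S T : pid_set S *m pid_set T = pid_set (S :&: T).
Proof.
rewrite mulmx_diag; congr diag_mx; apply/rowP => i; rewrite !mxE inE.
by case: (i \in S); case: (i \in T); rewrite ?mul1r ?mul0r.
Qed.

Lemma pid_set_id T : pid_set T *m pid_set T = pid_set T.
Proof. by rewrite pid_setM setIid. Qed.

Lemma tr_pid_set T : (pid_set T)^T = pid_set T.
Proof. exact: tr_diag_mx. Qed.

Lemma pid_setD S T : S \subset T -> pid_set T = pid_set (T :\: S) + pid_set S.
Proof.
move=> sST; rewrite -raddfD /=; congr diag_mx; apply/rowP => i; rewrite !mxE !inE.
have /implyP := subsetP sST i.
by case: (i \in S); case: (i \in T); rewrite /= ?addr0 ?add0r.
Qed.

Lemma principal_mx_id M T : principal_mx (principal_mx M T) T = principal_mx M T.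
Proof. by rewrite /principal_mx !mulmxA pid_set_id -!mulmxA pid_set_id. Qed.

Lemma tr_principal_mx M T : (principal_mx M T)^T = principal_mx M^T T.
Proof. by rewrite /principal_mx !trmx_mul tr_pid_set mulmxA. Qed.

Lemma principal_mx0 M : principal_mx M set0 = 0.
Proof. by apply/matrixP => i j; rewrite principal_mxE inE mxE. Qed.

Lemma principal_mxT M : principal_mx M setT = M.
Proof. by apply/matrixP => i j; rewrite principal_mxE !inE. Qed.

Lemma mxsub_enum_val M T :
  mxsub (fun i : 'I_#|T| => enum_val i) (fun j : 'I_#|T| => enum_val j) M
  = sel_mx T *m M *m (sel_mx T)^T.
Proof.
rewrite /sel_mx trmx_mxsub trmx1 mul_rowsub_mx mul1mx mulmx_colsub mulmx1.
by apply/matrixP => i j; rewrite !mxE.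
Qed.

Lemma sel_mx_mul_tr T : sel_mx T *m (sel_mx T)^T = 1%:M.
Proof.
rewrite -{1}(mulmx1 (sel_mx T)) -mxsub_enum_val; apply/matrixP => i j.
by rewrite !mxE (inj_eq enum_val_inj).
Qed.

Lemma tr_sel_mx_mul T : (sel_mx T)^T *m sel_mx T = pid_set T.
Proof.
apply/matrixP => x y; rewrite !mxE.
under eq_bigr do rewrite !mxE.
rewrite -(big_enum_val (fun z => (z == x)%:R * (z == y)%:R)) /= big_mkcond.
rewrite (bigD1 x) //= big1 ?addr0 => [|z /negbTE zx]; last by rewrite zx mul0r if_same.
by rewrite eqxx mul1r eq_sym; case: (x \in T); case: (y == x).
Qed.

Lemma sel_mx_pid_set T : sel_mx T *m pid_set T = sel_mx T.
Proof. by rewrite -tr_sel_mx_mul mulmxA sel_mx_mul_tr mul1mx. Qed.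

Lemma principal_mx_pid_set M T : principal_mx M T *m pid_set T = principal_mx M T.
Proof. by rewrite /principal_mx -mulmxA pid_set_id. Qed.

Lemma pid_set_principal_mx M T : pid_set T *m principal_mx M T = principal_mx M T.
Proof. by rewrite /principal_mx !mulmxA pid_set_id. Qed.

Lemma sel_mx_principal_mx M S T : S \subset T ->
  sel_mx S *m principal_mx M T *m (sel_mx S)^T = sel_mx S *m M *m (sel_mx S)^T.
Proof.
move=> /setIidPl eqS.
have ET : sel_mx S *m pid_set T = sel_mx S.
  by rewrite -{1}sel_mx_pid_set -mulmxA pid_setM eqS sel_mx_pid_set.
have EtT : pid_set T *m (sel_mx S)^T = (sel_mx S)^T by rewrite -tr_pid_set -trmx_mul ET.
by rewrite /principal_mx !mulmxA ET -!mulmxA EtT.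
Qed.

Lemma principal_mx_subset M S T :
  S \subset T -> principal_mx (principal_mx M T) S = principal_mx M S.
Proof.
move=> /setIidPl eqS; rewrite /principal_mx !mulmxA pid_setM eqS.
by rewrite -!mulmxA pid_setM setIC eqS.
Qed.

Lemma principal_mx_setD M S T : S \subset T ->
  M *m pid_set S = 0 -> pid_set S *m M = 0 ->
  principal_mx M (T :\: S) = principal_mx M T.
Proof.
move=> sST MS0 SM0; rewrite /principal_mx [in RHS](pid_setD sST) mulmxDl SM0 addr0.
by rewrite mulmxDr -[_ *m pid_set S]mulmxA MS0 mulmx0 addr0.
Qed.

Lemma principal_mx_sub_mul M Z S T : S \subset T -> principal_mx Z S = Z ->
  principal_mx (M - M *m Z *m M) T
  = principal_mx M T - principal_mx M T *m Z *m principal_mx M T.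
Proof.
move=> /setIidPl eqS <-; rewrite /principal_mx mulmxBr mulmxBl; congr (_ - _).
rewrite !mulmxA -(mulmxA _ (pid_set T) (pid_set S)) pid_setM setIC eqS.
by rewrite -(mulmxA _ (pid_set S) (pid_set T)) pid_setM eqS.
Qed.

Lemma pid_setE T : pid_set T = principal_mx 1%:M T.
Proof. by rewrite /principal_mx mulmx1 pid_set_id. Qed.

Lemma principal_mx_set1 M v : principal_mx M [set v] = M v v *: delta_mx v v.
Proof.
apply/matrixP => x y; rewrite principal_mxE !mxE !inE.
by case: eqP => [->|]; case: eqP => [->|] /=; rewrite ?mulr1 ?mulr0.
Qed.

Lemma principal_mx_set2 M v1 v2 : v1 != v2 ->
  principal_mx M [set v1; v2] = M v1 v1 *: delta_mx v1 v1 + M v1 v2 *: delta_mx v1 v2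
                                + M v2 v1 *: delta_mx v2 v1 + M v2 v2 *: delta_mx v2 v2.
Proof.
move=> /negbTE v12; apply/matrixP => x y; rewrite principal_mxE !mxE !inE.
have [->|xv1] := eqVneq x v1; have [->|yv1] := eqVneq y v1;
  rewrite ?eqxx ?v12 ?(eq_sym v2) ?v12 /= ?mulr1 ?mulr0 ?addr0 ?add0r //.
all: try (have [->|xv2] := eqVneq x v2); try (have [->|yv2] := eqVneq y v2);
  rewrite ?eqxx ?v12 ?(eq_sym v2) ?v12 ?(negbTE xv1) ?(negbTE yv1) /=
    ?mulr1 ?mulr0 ?addr0 ?add0r //.
Qed.

Lemma principal_mx_sel M T :
  principal_mx M T = (sel_mx T)^T *m (sel_mx T *m M *m (sel_mx T)^T) *m sel_mx T.
Proof. by rewrite !mulmxA tr_sel_mx_mul -mulmxA tr_sel_mx_mul. Qed.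

End PrincipalSubmatrix.

Arguments pid_set {R n} T.
Arguments sel_mx {R n} T.


Lemma mxrank_principal_pivot (F : fieldType) n (M Z : 'M[F]_n) (S T : {set 'I_n}) :
  S \subset T -> principal_mx Z S = Z ->
  principal_mx M S *m Z = pid_set S -> Z *m principal_mx M S = pid_set S ->
  \rank (principal_mx M T)
  = (\rank (principal_mx (M - M *m Z *m M) (T :\: S)) + #|S|)%N.
Proof.
move=> sST ZS MZ ZM; set E : 'M[F]_(#|S|, n) := sel_mx S.
have ZSr : Z *m pid_set S = Z by rewrite -ZS principal_mx_pid_set.
have ZSl : pid_set S *m Z = Z by rewrite -ZS pid_set_principal_mx.
have ENE : E *m principal_mx M T *m E^T = E *m principal_mx M S *m E^T.
  by rewrite !sel_mx_principal_mx.
have assoc X Y : (E *m X *m E^T) *m (E *m Y *m E^T) = E *m (X *m (E^T *m E) *m Y) *m E^T.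
  by rewrite !mulmxA.
have QP : (E *m Z *m E^T) *m (E *m principal_mx M T *m E^T) = 1%:M.
  by rewrite ENE assoc tr_sel_mx_mul ZSr ZM sel_mx_pid_set sel_mx_mul_tr.
have PQ : (E *m principal_mx M T *m E^T) *m (E *m Z *m E^T) = 1%:M.
  by rewrite ENE assoc tr_sel_mx_mul principal_mx_pid_set MZ sel_mx_pid_set sel_mx_mul_tr.
have EZE : E^T *m (E *m Z *m E^T) *m E = Z.
  by rewrite !mulmxA tr_sel_mx_mul -mulmxA tr_sel_mx_mul ZSl ZSr.
set K := schur_mx (principal_mx M T) E (E *m Z *m E^T).
have defK : K = principal_mx (M - M *m Z *m M) T.
  by rewrite (principal_mx_sub_mul _ sST ZS) /K /schur_mx EZE.
have KS : K *m pid_set S = 0 by rewrite -tr_sel_mx_mul mulmxA schur_mx_mul_tr ?mul0mx.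
have SK : pid_set S *m K = 0 by rewrite -tr_sel_mx_mul -mulmxA mul_schur_mx ?mulmx0.
rewrite (mxrank_schur_mx QP PQ) -/K -(principal_mx_subset _ (subsetDl T S)) -defK.
by rewrite (principal_mx_setD sST KS SK) defK principal_mx_id.
Qed.

Section PrincipalNullity.

Variables (F : fieldType) (n : nat).
Implicit Types (M Z : 'M[F]_n) (S T : {set 'I_n}).

Definition principal_nullity M T := (#|T| - \rank (principal_mx M T))%N.

Lemma mxrank_principal_mx M T :
  \rank (principal_mx M T)
  = \rank (mxsub (fun i : 'I_#|T| => enum_val i) (fun j : 'I_#|T| => enum_val j) M).
Proof.
rewrite mxsub_enum_val; apply/eqP; rewrite eqn_leq; apply/andP; split.
  by rewrite principal_mx_sel (leq_trans (mxrankM_maxl _ _)) ?mxrankM_maxr.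
by rewrite -(sel_mx_principal_mx _ (subxx T)) (leq_trans (mxrankM_maxl _ _)) ?mxrankM_maxr.
Qed.

Lemma mxrank_principal_mx_le M T : (\rank (principal_mx M T) <= #|T|)%N.
Proof. by rewrite mxrank_principal_mx rank_leq_row. Qed.

Lemma principal_nullity_pivot M Z S T :
  S \subset T -> principal_mx Z S = Z ->
  principal_mx M S *m Z = pid_set S -> Z *m principal_mx M S = pid_set S ->
  principal_nullity M T = principal_nullity (M - M *m Z *m M) (T :\: S).
Proof.
move=> sST ZS MZ ZM; rewrite /principal_nullity (mxrank_principal_pivot sST ZS MZ ZM).
by rewrite -(cardsID S T) (setIidPr sST) addnC subnDr.
Qed.

Lemma principal_nullity_isolated M T v : v \in T ->
  (forall u, u \in T -> M v u = 0) -> (forall u, u \in T -> M u v = 0) ->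
  principal_nullity M T = (principal_nullity M (T :\ v)).+1.
Proof.
move=> vT Mv0 M0v.
have eqM : principal_mx M (T :\ v) = principal_mx M T.
  apply/matrixP => x y; rewrite !principal_mxE !inE.
  have [->|xv] := eqVneq x v; have [->|yv] := eqVneq y v;
    rewrite ?eqxx ?xv ?yv ?andbF //=;
    by case: ifP => // /andP[xT yT]; rewrite ?Mv0 ?M0v.
rewrite /principal_nullity eqM (cardsD1 v T) vT add1n subSn // -eqM.
exact: mxrank_principal_mx_le.
Qed.

End PrincipalNullity.

Section PivotUpdates.

Variables (R : comPzRingType) (n : nat) (M : 'M[R]_n).
Hypothesis symM : M^T = M.

Lemma sym_entry x y : M x y = M y x.
Proof. by rewrite -{1}symM mxE. Qed.

Lemma sym_sub_mulmx Z : Z^T = Z -> (M - M *m Z *m M)^T = M - M *m Z *m M.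
Proof. by move=> symZ; rewrite linearB /= !trmx_mul symM symZ mulmxA. Qed.

Lemma mulmx_delta_mulmx a b : M *m delta_mx a b *m M = \matrix_(x, y) (M x a * M b y).
Proof.
rewrite -(mul_delta_mx (0 : 'I_1)) !mulmxA -colE -mulmxA -rowE.
by apply/matrixP => x y; rewrite !mxE big_ord1 !mxE.
Qed.

Lemma gpr_pivot v : M v v = 1 ->
  [/\ \matrix_(x, y) (M x y - M v x * M v y) = M - M *m principal_mx M [set v] *m M
    & principal_mx M [set v] *m principal_mx M [set v] = pid_set [set v]].
Proof.
move=> Mvv; rewrite principal_mx_set1 Mvv scale1r pid_setE principal_mx_set1 mxE eqxx.
rewrite scale1r mul_delta_mx mulmx_delta_mulmx; split=> //.
by apply/matrixP => x y; rewrite !mxE (sym_entry x v).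
Qed.

Lemma gdr_pivot v1 v2 : v1 != v2 -> M v1 v1 = 0 -> M v2 v2 = 0 -> M v1 v2 = 1 ->
  [/\ \matrix_(x, y) (M x y - (M v1 x * M v2 y + M v2 x * M v1 y))
      = M - M *m principal_mx M [set v1; v2] *m M
    & principal_mx M [set v1; v2] *m principal_mx M [set v1; v2] = pid_set [set v1; v2]].
Proof.
move=> v12 M11 M22 M12; have M21 : M v2 v1 = 1 by rewrite sym_entry.
rewrite pid_setE !principal_mx_set2 // M11 M22 M12 M21 !mxE !eqxx (negbTE v12).
rewrite eq_sym (negbTE v12) /= !scale1r !scale0r !add0r !addr0; split.
  apply/matrixP => x y; rewrite mulmxDr mulmxDl !mulmx_delta_mulmx !mxE.
  by rewrite (sym_entry x v1) (sym_entry x v2).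
by rewrite mulmxDl !mulmxDr !mul_delta_mx !mul_delta_mx_0 ?add0r ?addr0 // eq_sym.
Qed.

End PivotUpdates.

Section ReductionStrategies.

Variable n : nat.
Implicit Types (M : 'M['F_2]_n) (D S : {set 'I_n}) (s : seq (rule n)).

Lemma apply_rule_nullity r D M D1 M1 S : M^T = M -> rule_dom r \subset S ->
  apply_rule r (D, M) = Some (D1, M1) ->
  [/\ M1^T = M1, D1 = D :\: rule_dom r
    & principal_nullity M (D :&: S) = (principal_nullity M1 (D1 :&: S) + is_gnr r)%N].
Proof.
move=> symM; have symZ P : (principal_mx M P)^T = principal_mx M P.
  by rewrite tr_principal_mx symM.
case: r => [v|v1 v2|v] /=.
- rewrite sub1set => vS; case: ifP => // /andP[vD /eqP Mvv] [<- <-].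
  have [-> ZZ] := gpr_pivot symM Mvv.
  split; [exact: (sym_sub_mulmx symM (symZ _)) | by [] | rewrite setIDAC addn0].
  apply: (principal_nullity_pivot _ (principal_mx_id _ _) ZZ ZZ).
  by rewrite sub1set inE vD.
- rewrite subUset !sub1set => /andP[v1S v2S].
  case: ifP => // /and5P[v1D v2D v12 /eqP M11 /andP[/eqP M22 /eqP M12]] [<- <-].
  have [-> ZZ] := gdr_pivot symM v12 M11 M22 M12.
  split; [exact: (sym_sub_mulmx symM (symZ _)) | by rewrite setDDl |].
  rewrite setDDl setIDAC addn0.
  apply: (principal_nullity_pivot _ (principal_mx_id _ _) ZZ ZZ).
  by rewrite subUset !sub1set !inE v1D v1S v2D v2S.
- rewrite sub1set => vS; case: ifP => // /andP[/andP[vD /eqP Mvv] /forall_inP Mv0] [<- <-].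
  have Mv u : u \in D :&: S -> M v u = 0.
    case/setIP=> uD _; have [->//|uv] := eqVneq u v.
    exact/eqP/(implyP (Mv0 u uD)).
  split=> //; rewrite setIDAC addn1; apply: (principal_nullity_isolated _ Mv).
    by rewrite inE vD.
  by move=> u uDS; rewrite (sym_entry symM) Mv.
Qed.

Lemma run_cons r s G : run (r :: s) G = obind (run s) (apply_rule r G).
Proof. by []. Qed.

Lemma run_nullity s D M D' M' S : M^T = M -> strat_dom s \subset S ->
  run s (D, M) = Some (D', M') ->
  D' = D :\: strat_dom s
  /\ principal_nullity M (D :&: S) = (principal_nullity M' (D' :&: S) + count (@is_gnr n) s)%N.
Proof.
elim: s D M => [|r s IHs] D M symM.
  by rewrite /strat_dom big_nil setD0 addn0 => _ [-> ->].
rewrite /strat_dom big_cons -/(strat_dom s) subUset run_cons => /andP[rS sS].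
case eqG1: (apply_rule r (D, M)) => [[D1 M1]|] //= runs.
have [symM1 eqD1 step] := apply_rule_nullity symM rS eqG1.
have [-> IH] := IHs D1 M1 symM1 sS runs.
split; first by rewrite eqD1 setDDl.
by rewrite step IH -addnA [(is_gnr r + _)%N]addnC.
Qed.

Lemma gnr_count_nullity (A : 'M['F_2]_n) s : A^T = A -> applicable A s ->
  count (@is_gnr n) s = principal_nullity A (strat_dom s).
Proof.
rewrite /applicable /graph_state => symA; case runs: run => [[D' M']|] // _.
rewrite -[strat_dom s]setTI; have [-> ->] := run_nullity symA (subxx _) runs.
by rewrite setIDAC setTI setDv /principal_nullity principal_mx0 cards0.
Qed.

End ReductionStrategies.

Theorem mainTheorem12 (n : nat) (A : 'M['F_2]_n) (symA : A^T = A)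
    (W : {set 'I_n}) (redW : reducible A W) :
  (forall s : seq (rule n), applicable A s -> strat_dom s = W ->
     count (@is_gnr n) s = (#|W| - \rank (submxW A W))%N) /\
  (forall s : seq (rule n), successful A s ->
     count (@is_gnr n) s = (n - \rank A)%N).
Proof.
split=> [s appl domW | s [appl domT]]; rewrite (gnr_count_nullity symA appl) /principal_nullity.
  by rewrite domW mxrank_principal_mx.
by rewrite domT principal_mxT cardsT card_ord.
Qed.
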